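(* Let $\mathcal{H}$ be a finite-dimensional Hilbert space and let $\Phi:\mathcal{B}(\mathcal{H})\to\mathcal{B}(\mathcal{H})$ be a unital quantum channel (completely positive, trace-preserving, with $\Phi(\mathbb{1})=\mathbb{1}$). Let $\rho_{\text{in}}=\sum_{i=1}^{r}p_i|p_i\rangle\langle p_i|$ be a density matrix on $\mathcal{H}$ of rank $r$, where $\{|p_i\rangle\}_{i=1}^r$ are orthonormal, $0<p_i\leq1$, $\sum_{i=1}^r p_i=1$, and let $\rho_{\text{out}}=\Phi(\rho_{\text{in}})$. Let $\Delta S\equiv S(\rho_{\text{out}})-S(\rho_{\text{in}})$ and $$L_{\text{otm}}\equiv-\ln\Big(\sum_{i=1}^{r}e^{-C(\Phi(|p_i\rangle\langle p_i|),\rho_{\text{out}})}\Big).$$ Then $\Delta S\geq L_{\text{otm}}\geq 0$.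
   Context: $\mathcal{B}(\mathcal{H})$ denotes the set of density matrices on $\mathcal{H}$ and $\mathbb{1}$ the identity on $\mathcal{H}$. $S(\rho)\equiv-\mathrm{Tr}[\rho\ln\rho]$ is the von Neumann entropy. $C(\rho_1,\rho_2)\equiv-\mathrm{Tr}[\rho_1\ln\rho_2]$ is the quantum cross entropy of $\rho_1$ with respect to $\rho_2$; it is finite when $\mathrm{supp}(\rho_1)\subseteq\mathrm{supp}(\rho_2)$ (with $\ln\rho_2$ taken on the support of $\rho_2$) and $+\infty$ otherwise. *)

From HB Require Import structures.
From mathcomp Require Import all_boot all_order all_algebra.
From mathcomp Require Import sesquilinear spectral.
From mathcomp Require Import complex mxtens.
From mathcomp Require Import all_classical all_reals.
From mathcomp Require Import exp.

Set Implicit Arguments.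
Unset Strict Implicit.
Unset Printing Implicit Defensive.

Import Order.TTheory GRing.Theory Num.Theory.
Local Open Scope ring_scope.
Local Open Scope sesquilinear_scope.

Section QDefs.
Variable R : realType.
Local Notation C := R[i].
Local Notation toC := (real_complex R).

Definition psdmx m (A : 'M[C]_m) : Prop :=
  A ^t* = A /\ forall v : 'rV[C]_m, 0 <= (v *m A *m v ^t*) 0 0.

Definition density m (A : 'M[C]_m) : Prop := psdmx A /\ \tr A = 1.

(* the ampliation id_k (x) Phi acting on 'M_(k*n), viewed as k x k blocks
   of n x n matrices *)
Definition ampl n k (Phi : 'M[C]_n -> 'M[C]_n) (X : 'M[C]_(k * n)) : 'M[C]_(k * n) :=
  \matrix_(u, w) Phi (\matrix_(a, b)
        X (mxtens_index ((mxtens_unindex u).1, a))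
          (mxtens_index ((mxtens_unindex w).1, b)))
      (mxtens_unindex u).2 (mxtens_unindex w).2.

Definition completely_positive n (Phi : 'M[C]_n -> 'M[C]_n) : Prop :=
  forall k (X : 'M[C]_(k * n)), psdmx X -> psdmx (ampl Phi X).

Definition trace_preserving n (Phi : 'M[C]_n -> 'M[C]_n) : Prop :=
  forall X, \tr (Phi X) = \tr X.

Definition quantum_channel n (Phi : {linear 'M[C]_n -> 'M[C]_n}) : Prop :=
  completely_positive Phi /\ trace_preserving Phi.

Definition unital n (Phi : 'M[C]_n -> 'M[C]_n) : Prop := Phi 1%:M = 1%:M.

(* matrix logarithm of a Hermitian (PSD) matrix via its spectral
   decomposition A = P^-1 diag(mu) P; analysis' ln satisfies ln 0 = 0, so
   this is ln A taken on the support of A (and 0 on its kernel). *)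
Definition mxln n (A : 'M[C]_n) : 'M[C]_n :=
  invmx (spectralmx A) *m
  diag_mx (map_mx (fun z => toC (ln (complex.Re z))) (spectral_diag A))
  *m spectralmx A.

Definition vN_entropy n (rho : 'M[C]_n) : R :=
  - complex.Re (\tr (rho *m mxln rho)).

(* support inclusion supp(A) <= supp(B): column space of A inside that of B *)
Definition supp_sub n (A B : 'M[C]_n) : bool := (A^T <= B^T)%MS.

Definition cross_entropy n (rho1 rho2 : 'M[C]_n) : \bar R :=
  if supp_sub rho1 rho2 then (- complex.Re (\tr (rho1 *m mxln rho2)))%:E
  else +oo%E.

End QDefs.

(* With sigma_i = Phi(|p_i><p_i|) and c_i = C(sigma_i, rho_out), linearity of the trace and
   the eigenvectors |p_i> of rho_in give DeltaS = sum_i p_i c_i + sum_i p_i ln p_i, and Gibbs'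
   inequality (concavity of ln) bounds this below by -ln sum_i e^{-c_i} = L_otm.  For
   L_otm >= 0, Jensen's inequality in the eigenbasis of rho_out gives
   e^{-c_i} <= Tr[sigma_i rho_out], and sum_i Tr[sigma_i rho_out] = Tr[Phi(P) rho_out] is at most
   Tr[Phi(1) rho_out] = 1 because P = sum_i |p_i><p_i| <= 1 and Phi is positive and unital.
   The c_i are finite because p_i sigma_i <= rho_out puts supp sigma_i inside supp rho_out. *)

Set Warnings "-notation-overridden,-ambiguous-paths,-notation-incompatible-prefix,-deprecated".
From HB Require Import structures.
From mathcomp Require Import all_boot all_order all_algebra.
From mathcomp Require Import sesquilinear spectral.
From mathcomp Require Import complex mxtens.
From mathcomp Require Import all_classical all_reals.
From mathcomp Require Import sequences exp.
Import Order.TTheory GRing.Theory Num.Theory.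
Local Open Scope ring_scope.
Local Open Scope sesquilinear_scope.

Set Implicit Arguments.
Unset Strict Implicit.
Unset Printing Implicit Defensive.

Section Jensen.
Variable R : realType.

Lemma ln_le_subr1 (x : R) : 0 < x -> ln x <= x - 1.
Proof.
move=> x_gt0; have := @le_ln1Dx R (x - 1); rewrite [1 + _]addrC subrK.
by apply; rewrite -subr_gt0 opprK subrK.
Qed.

Lemma expR_wsum_ln_le r (s mu : 'I_r -> R) :
  (forall k, 0 <= s k) -> (forall k, 0 <= mu k) -> (forall k, mu k = 0 -> s k = 0) ->
  \sum_k s k = 1 -> expR (\sum_k s k * ln (mu k)) <= \sum_k s k * mu k.
Proof.
move=> s_ge0 mu_ge0 s_supp s_sum1; set M := \sum_k s k * mu k.
have M_gt0 : 0 < M.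
  rewrite lt_def sumr_ge0 ?andbT => [|k _]; last exact: mulr_ge0.
  apply/eqP => /psumr_eq0P M0.
  suff : \sum_k s k = 0 by rewrite s_sum1 => /eqP; rewrite oner_eq0.
  apply: big1 => k _; have /eqP := M0 (fun k _ => mulr_ge0 (s_ge0 k) (mu_ge0 k)) k isT.
  by rewrite mulf_eq0 => /orP[/eqP | /eqP /s_supp].
suff : \sum_k s k * (ln (mu k) - ln M) <= \sum_k s k * (mu k / M - 1).
  under eq_bigr do rewrite mulrBr; under [X in _ <= X]eq_bigr do rewrite mulrBr mulr1 mulrA.
  rewrite !sumrB -!mulr_suml s_sum1 mul1r -/M divff ?gt_eqF // subrr subr_le0.
  by rewrite -ler_ln ?posrE ?expR_gt0 // expRK.
apply: ler_sum => k _; have [->|sk_neq0] := eqVneq (s k) 0; first by rewrite !mul0r.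
have mu_gt0 : 0 < mu k by rewrite lt_def mu_ge0 andbT; apply: contra_neq sk_neq0 => /s_supp.
by rewrite ler_wpM2l // -ln_div ?posrE // ln_le_subr1 ?divr_gt0.
Qed.

Lemma gibbs_lne_sum_expR r (a c : 'I_r -> R) : (forall i, 0 < a i) -> \sum_i a i = 1 ->
  (- lne (\sum_i (expR (- c i))%:E) <= (\sum_i a i * c i + \sum_i a i * ln (a i))%:E)%E.
Proof.
move=> a_gt0 a_sum1; rewrite sumEFin; set S := \sum_i expR (- c i).
pose mu i := expR (- c i) / a i.
have mu_gt0 i : 0 < mu i by rewrite divr_gt0 ?expR_gt0.
have mu_eq0 i : mu i = 0 -> a i = 0 by move=> /eqP; rewrite gt_eqF.
have := expR_wsum_ln_le (fun i => ltW (a_gt0 i)) (fun i => ltW (mu_gt0 i)) mu_eq0 a_sum1.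
have -> : \sum_i a i * mu i = S.
  by apply: eq_bigr => i _; rewrite mulrC divfK ?gt_eqF.
have -> : \sum_i a i * ln (mu i) = - (\sum_i a i * c i + \sum_i a i * ln (a i)).
  rewrite -big_split -sumrN; apply: eq_bigr => i _.
  by rewrite ln_div ?posrE ?expR_gt0 // expRK mulrBr mulrN opprD.
move=> le_S; have S_gt0 : 0 < S := lt_le_trans (expR_gt0 _) le_S.
by rewrite lne_EFin // -EFinN lee_fin lerNl -ler_expR lnK.
Qed.

End Jensen.

Section PositiveSemidefinite.
Variable R : realType.
Local Notation C := R[i].
Local Notation toC := (real_complex R).

Lemma Re_toCM (x : R) (z : C) : complex.Re (toC x * z) = x * complex.Re z.
Proof. by case: z => a b /=; rewrite mul0r subr0. Qed.

Lemma ger0_toCRe (z : C) : 0 <= z -> toC (complex.Re z) = z.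
Proof. by case: z => a b; rewrite lecE /= => /andP[/eqP -> _]. Qed.

Lemma ger0_Re (z : C) : 0 <= z -> 0 <= complex.Re z.
Proof. by case: z => a b; rewrite lecE /= => /andP[]. Qed.

Lemma trmxC_mul_unitary m (U : 'M[C]_m) : U \is unitarymx -> U ^t* *m U = 1%:M.
Proof. by move=> U_unitary; rewrite -[U ^t*]mul1mx mulmxKtV. Qed.

Definition qform m (v : 'rV[C]_m) (A : 'M[C]_m) : C := (v *m A *m v ^t*) 0 0.

Lemma qform_row m k (M : 'M[C]_(m, k)) (A : 'M[C]_k) j :
  (M *m A *m M ^t*) j j = qform (row j M) A.
Proof.
rewrite /qform !mxE; apply: eq_bigr => l _; rewrite !mxE; congr (_ * _).
by apply: eq_bigr => l' _; rewrite !mxE.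
Qed.

Lemma psdmx1 m : psdmx (1%:M : 'M[C]_m).
Proof.
split; first by rewrite trmx1 map_mx1.
by move=> v; rewrite mulmx1 -dotmxE dnorm_ge0.
Qed.

Lemma psdmx_congr m k (M : 'M[C]_(k, m)) (A : 'M[C]_m) : psdmx A -> psdmx (M *m A *m M ^t*).
Proof.
move=> [hermA qA]; split; first by rewrite !trmx_mul !map_mxM trmxCK hermA mulmxA.
by move=> v; have := qA (v *m M); rewrite trmx_mul map_mxM !mulmxA.
Qed.

Lemma psdmx_gram m k (M : 'M[C]_(m, k)) : psdmx (M *m M ^t*).
Proof. by rewrite -[M in M *m _]mulmx1; apply/psdmx_congr/psdmx1. Qed.

Lemma psdmx0 m : psdmx (0 : 'M[C]_m).
Proof. by split=> [|v]; rewrite ?trmx0 ?map_mx0 // mulmx0 mul0mx mxE. Qed.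

Lemma psdmxD m (A B : 'M[C]_m) : psdmx A -> psdmx B -> psdmx (A + B).
Proof.
move=> [hermA qA] [hermB qB]; split; first by rewrite linearD /= map_mxD hermA hermB.
by move=> v; rewrite mulmxDr mulmxDl mxE addr_ge0.
Qed.

Lemma psdmxZ m (c : R) (A : 'M[C]_m) : 0 <= c -> psdmx A -> psdmx (toC c *: A).
Proof.
move=> c_ge0 [hermA qA]; split.
  rewrite linearZ /= map_mxZ hermA; congr (_ *: _).
  by apply/conj_Creal/ger0_real; rewrite ler0c.
by move=> v; rewrite -scalemxAr -scalemxAl mxE mulr_ge0 ?ler0c.
Qed.

Lemma psdmx_sum m I (s : seq I) (F : I -> 'M[C]_m) :
  (forall i, psdmx (F i)) -> psdmx (\sum_(i <- s) F i).
Proof. by move=> F_psd; apply: big_ind => //; [exact: psdmx0 | exact: psdmxD]. Qed.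

Lemma psdmx_wsum m I (s : seq I) (w : I -> R) (F : I -> 'M[C]_m) :
  (forall i, 0 <= w i) -> (forall i, psdmx (F i)) -> psdmx (\sum_(i <- s) toC (w i) *: F i).
Proof. by move=> w_ge0 F_psd; apply: psdmx_sum => i; apply: psdmxZ. Qed.

Lemma qform_wsum m I (s : seq I) (w : I -> C) (F : I -> 'M[C]_m) v :
  qform v (\sum_(i <- s) w i *: F i) = \sum_(i <- s) w i * qform v (F i).
Proof.
rewrite /qform mulmx_sumr mulmx_suml summxE.
by apply: eq_bigr => i _; rewrite -scalemxAr -scalemxAl mxE.
Qed.

Lemma Re_mxtrace_wsum_mulmx m I (s : seq I) (w : I -> R) (F : I -> 'M[C]_m) (B : 'M[C]_m) :
  complex.Re (\tr ((\sum_(i <- s) toC (w i) *: F i) *m B)) =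
  \sum_(i <- s) w i * complex.Re (\tr (F i *m B)).
Proof.
rewrite mulmx_suml (raddf_sum (@mxtrace _ m)) (raddf_sum (@complex.Re R)) /=.
by apply: eq_bigr => i _; rewrite -scalemxAl mxtraceZ Re_toCM.
Qed.

End PositiveSemidefinite.

Section Spectral.
Variable R : realType.
Local Notation C := R[i].
Local Notation toC := (real_complex R).
Variables (m : nat) (A : 'M[C]_m).
Hypothesis hermA : A ^t* = A.
Local Notation U := (spectralmx A).
Local Notation d := (spectral_diag A).

Let U_unitary : U \is unitarymx := spectral_unitarymx A.

Lemma hermitian_spectralE : A = U ^t* *m diag_mx d *m U.
Proof.
have /orthomx_spectralP : A \is normalmx by apply/normalmxP; rewrite hermA.
by rewrite invmx_unitary.
Qed.

Lemma spectral_mulmx : U *m A = diag_mx d *m U.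
Proof. by rewrite [X in U *m X]hermitian_spectralE !mulmxA (unitarymxP U_unitary) mul1mx. Qed.

Lemma spectral_diag_qform k : d 0 k = qform (row k U) A.
Proof.
by rewrite -qform_row spectral_mulmx mulmxtVK // mxE eqxx mulr1n.
Qed.

Lemma mxtrace_mulmx_spectral (X : 'M[C]_m) (e : 'rV[C]_m) :
  \tr (X *m (U ^t* *m diag_mx e *m U)) = \sum_k (U *m X *m U ^t*) k k * e 0 k.
Proof.
rewrite !mulmxA mxtrace_mulC !mulmxA mul_mx_diag /mxtrace.
by apply: eq_bigr => k _; rewrite mxE.
Qed.

Lemma mxtrace_mulmx_herm (X : 'M[C]_m) :
  \tr (X *m A) = \sum_k (U *m X *m U ^t*) k k * d 0 k.
Proof. by rewrite [Y in \tr (_ *m Y)]hermitian_spectralE mxtrace_mulmx_spectral. Qed.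

Lemma mxtrace_mulmx_mxln (X : 'M[C]_m) :
  \tr (X *m mxln A) = \sum_k (U *m X *m U ^t*) k k * toC (ln (complex.Re (d 0 k))).
Proof.
rewrite /mxln invmx_unitary // mxtrace_mulmx_spectral.
by apply: eq_bigr => k _; congr (_ * _); rewrite mxE.
Qed.

Lemma mxln_eigen (v : 'cV[C]_m) (l : R) : A *m v = toC l *: v -> mxln A *m v = toC (ln l) *: v.
Proof.
move=> Av.
have diag_ln (w : 'cV[C]_m) : diag_mx d *m w = toC l *: w ->
    diag_mx (map_mx (fun z => toC (ln (complex.Re z))) d) *m w = toC (ln l) *: w.
  move=> /matrixP dw; apply/matrixP => k j; rewrite ord1 {j}; have := dw k 0.
  rewrite !mul_diag_mx !mxE.
  by have [->|w_neq0 /(mulIf w_neq0)->] := eqVneq (w k 0) 0; rewrite ?mulr0.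
rewrite /mxln invmx_unitary // -!mulmxA diag_ln; last first.
  by rewrite mulmxA -spectral_mulmx -mulmxA Av scalemxAr.
by rewrite -scalemxAr mulmxA (trmxC_mul_unitary U_unitary) mul1mx.
Qed.

Lemma supp_sub_spectralP (S : 'M[C]_m) :
  supp_sub S A <-> forall k, d 0 k = 0 -> row k (U *m S) = 0.
Proof.
split.
  move=> /submxP[D SE] k dk; have -> : S = A *m D^T by rewrite -[S]trmxK SE trmx_mul trmxK.
  by apply/rowP => j; rewrite mulmxA spectral_mulmx -mulmxA mul_diag_mx !mxE dk mul0r.
move=> USk; rewrite /supp_sub.
(* As [0^-1 = 0], [diag_mx d *m diag_mx dinv] projects onto the support of [d]. *)
pose dinv := map_mx GRing.inv d.
suff -> : S = A *m (U ^t* *m diag_mx dinv *m U *m S) by rewrite trmx_mul submxMl.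
have dUS : diag_mx d *m diag_mx dinv *m (U *m S) = U *m S.
  apply/matrixP => k j; rewrite mulmx_diag mul_diag_mx !mxE.
  have [dk|dk] := eqVneq (d 0 k) 0; last by rewrite divff // mul1r.
  by have /rowP/(_ j) := USk k dk; rewrite !mxE => ->; rewrite mulr0.
rewrite [Y in _ = Y *m _]hermitian_spectralE !mulmxA mulmxtVK // -!mulmxA.
rewrite [diag_mx d *m _]mulmxA dUS.
by rewrite mulmxA (trmxC_mul_unitary U_unitary) mul1mx.
Qed.

End Spectral.

Section PsdSpectral.
Variable R : realType.
Local Notation C := R[i].
Local Notation toC := (real_complex R).

Lemma spectral_diag_ge0 m (A : 'M[C]_m) k : psdmx A -> 0 <= spectral_diag A 0 k.
Proof. by move=> [hermA qA]; rewrite (spectral_diag_qform hermA); apply: qA. Qed.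

Lemma psdmx_qform_eq0 m (A : 'M[C]_m) (v : 'rV[C]_m) : psdmx A -> qform v A = 0 -> v *m A = 0.
Proof.
move=> psdA; set U := spectralmx A; set d := spectral_diag A; set w := v *m U ^t*.
have qE : qform v A = \sum_k w 0 k * d 0 k * (w 0 k)^*.
  rewrite /qform [Y in v *m Y](hermitian_spectralE psdA.1) !mulmxA -/w -[_ *m U *m _]mulmxA.
  have -> : U *m v ^t* = w ^t* by rewrite trmx_mul map_mxM trmxCK.
  by rewrite mxE; apply: eq_bigr => k _; rewrite mul_mx_diag !mxE.
have wE : v *m U ^t* = w by [].
clearbody w.
have terms_ge0 k : 0 <= w 0 k * d 0 k * (w 0 k)^*.
  by rewrite mulrAC mulr_ge0 ?mul_conjC_ge0 ?spectral_diag_ge0.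
rewrite qE => /(psumr_eq0P (fun k _ => terms_ge0 k)) w0.
have wd0 : w *m diag_mx d = 0.
  apply/matrixP => i k; rewrite ord1 mul_mx_diag !mxE.
  by have /eqP := w0 k isT; rewrite mulf_eq0 conjC_eq0 => /orP[] /eqP ->; rewrite ?mul0r.
by rewrite [Y in v *m Y](hermitian_spectralE psdA.1) !mulmxA wE wd0 !mul0mx.
Qed.

Lemma Re_mxtrace_psdM_ge0 m (X A : 'M[C]_m) : psdmx X -> psdmx A ->
  0 <= complex.Re (\tr (X *m A)).
Proof.
move=> psdX psdA; rewrite (mxtrace_mulmx_herm psdA.1) raddf_sum.
apply: sumr_ge0 => k _; apply/ger0_Re/mulr_ge0; last exact: spectral_diag_ge0.
by rewrite qform_row; apply: psdX.2.
Qed.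

Lemma expR_mxtrace_mxln_le m (A S : 'M[C]_m) : psdmx A -> psdmx S -> \tr S = 1 ->
  supp_sub S A -> expR (complex.Re (\tr (S *m mxln A))) <= complex.Re (\tr (S *m A)).
Proof.
move=> psdA psdS trS1 /(supp_sub_spectralP psdA.1) suppS.
set U := spectralmx A; set d := spectral_diag A.
pose s k := complex.Re ((U *m S *m U ^t*) k k).
pose mu k := complex.Re (d 0 k).
have sE k : (U *m S *m U ^t*) k k = toC (s k) by rewrite ger0_toCRe // qform_row; apply: psdS.2.
have muE k : d 0 k = toC (mu k) by rewrite ger0_toCRe // spectral_diag_ge0.
have -> : complex.Re (\tr (S *m mxln A)) = \sum_k s k * ln (mu k).
  by rewrite mxtrace_mulmx_mxln raddf_sum /=; apply: eq_bigr => k _; rewrite sE Re_toCM.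
have -> : complex.Re (\tr (S *m A)) = \sum_k s k * mu k.
  rewrite (mxtrace_mulmx_herm psdA.1) raddf_sum.
  by apply: eq_bigr => k _; rewrite sE muE -rmorphM.
apply: expR_wsum_ln_le => [k|k|k mu0|].
- by apply: ger0_Re; rewrite qform_row; apply: psdS.2.
- exact/ger0_Re/spectral_diag_ge0.
- have /rowP US0 := suppS k (etrans (muE k) (congr1 toC mu0)).
  by rewrite /s mxE big1 // => j _; have := US0 j; rewrite !mxE => ->; rewrite mul0r.
- have <- : complex.Re (\tr S) = 1 by rewrite trS1.
  rewrite -[X in \tr X]mul1mx -(trmxC_mul_unitary (spectral_unitarymx A)) -mulmxA.
  by rewrite mxtrace_mulC /mxtrace raddf_sum.
Qed.

Lemma psdmx_supp_sub_wsum m r (w : 'I_r -> R) (F : 'I_r -> 'M[C]_m) i :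
  (forall j, 0 <= w j) -> (forall j, psdmx (F j)) -> 0 < w i ->
  supp_sub (F i) (\sum_j toC (w j) *: F j).
Proof.
move=> w_ge0 psdF wi_gt0; set B := \sum_j _.
have psdB : psdmx B by exact: psdmx_wsum.
apply/(supp_sub_spectralP psdB.1) => k dk0; rewrite row_mul.
have terms_ge0 j : 0 <= toC (w j) * qform (row k (spectralmx B)) (F j).
  by rewrite mulr_ge0 ?ler0c //; apply: (psdF j).2.
have := spectral_diag_qform psdB.1 k; rewrite dk0 qform_wsum.
move=> /esym /(psumr_eq0P (fun j _ => terms_ge0 j)) /(_ i isT) /eqP.
rewrite mulf_eq0 => /orP[/eqP/(congr1 (@complex.Re R)) /= wi0 | /eqP].
  by rewrite wi0 ltxx in wi_gt0.
exact: psdmx_qform_eq0.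
Qed.

End PsdSpectral.

Section Channels.
Variable R : realType.
Local Notation C := R[i].

Definition positive_map n (Phi : 'M[C]_n -> 'M[C]_n) : Prop :=
  forall A, psdmx A -> psdmx (Phi A).

Lemma psdmx_mxsub m k (f : 'I_k -> 'I_m) (A : 'M[C]_m) : psdmx A -> psdmx (mxsub f f A).
Proof.
have -> : mxsub f f A = rowsub f 1%:M *m A *m (rowsub f 1%:M) ^t*.
  have -> : (rowsub f 1%:M : 'M[C]_(k, m)) ^t* = colsub f 1%:M.
    by apply/matrixP => i j; rewrite !mxE eq_sym conjC_nat.
  by rewrite !mul_rowsub_mx mulmx_colsub mul1mx mulmx1 -mxsubrc.
exact: psdmx_congr.
Qed.

Lemma completely_positive_positive n (Phi : 'M[C]_n -> 'M[C]_n) :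
  completely_positive Phi -> positive_map Phi.
Proof.
move=> cpPhi Y psdY.
(* View [Y] as the single block of a 1 x 1 block matrix of size [1 * n]. *)
pose g (u : 'I_(1 * n)) := (mxtens_unindex u).2.
pose f (a : 'I_n) : 'I_(1 * n) := mxtens_index (ord0, a).
have ampl_mxsub : ampl Phi (mxsub g g Y) = mxsub g g (Phi Y).
  apply/matrixP => u w; rewrite !mxE; congr (Phi _ _ _).
  by apply/matrixP => a b; rewrite !mxE /g !mxtens_indexK.
have -> : Phi Y = mxsub f f (mxsub g g (Phi Y)).
  by apply/matrixP => a b; rewrite !mxE /f /g !mxtens_indexK.
by apply/psdmx_mxsub; rewrite -ampl_mxsub; apply/cpPhi/psdmx_mxsub.
Qed.

End Channels.

Section Orthonormal.
Variable R : realType.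
Local Notation C := R[i].
Local Notation toC := (real_complex R).
Variables (n r : nat) (ket : 'I_r -> 'cV[C]_n).
Hypothesis orthonormal : forall i j, (ket i)^t* *m ket j = (i == j)%:R%:M.
Local Notation proj i := (ket i *m (ket i)^t*).

Lemma mxtrace_proj i : \tr (proj i) = 1.
Proof. by rewrite mxtrace_mulC orthonormal eqxx mxtrace_scalar. Qed.

Lemma mxtrace_wsum_proj (w : 'I_r -> C) : \tr (\sum_i w i *: proj i) = \sum_i w i.
Proof.
rewrite (raddf_sum (@mxtrace _ n)) /=.
by apply: eq_bigr => i _; rewrite mxtraceZ mxtrace_proj mulr1.
Qed.

Lemma wsum_proj_mulmx (w : 'I_r -> C) j : (\sum_i w i *: proj i) *m ket j = w j *: ket j.
Proof.
rewrite mulmx_suml (bigD1 j) //= big1 => [|i ij].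
  by rewrite -scalemxAl -mulmxA orthonormal eqxx mul_mx_scalar scale1r addr0.
by rewrite -scalemxAl -mulmxA orthonormal (negbTE ij) mul_mx_scalar scale0r scaler0.
Qed.

Lemma psdmx_1_sub_sum_proj : psdmx (1%:M - \sum_i proj i).
Proof.
set P := \sum_i proj i.
have hermP : P ^t* = P by exact: (psdmx_sum _ (fun i => psdmx_gram (ket i))).1.
have P_ket j : P *m ket j = ket j.
  rewrite -[RHS]scale1r -(wsum_proj_mulmx (fun=> 1)).
  by congr (_ *m _); under [RHS]eq_bigr do rewrite scale1r.
have -> : 1%:M - P = (1%:M - P) *m (1%:M - P) ^t*.
  have PP : P *m P = P.
    by rewrite {2 3}/P mulmx_sumr; apply: eq_bigr => j _; rewrite mulmxA P_ket.
  by rewrite linearB /= map_mxB trmx1 map_mx1 hermP mulmxBl !mulmxBr !mul1mx mulmx1 PP subrr subr0.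
exact: psdmx_gram.
Qed.

Lemma vN_entropy_wsum_proj (p : 'I_r -> R) : (forall i, 0 <= p i) ->
  vN_entropy (\sum_i toC (p i) *: proj i) = - \sum_i p i * ln (p i).
Proof.
move=> p_ge0; set rho := \sum_i _.
have hermrho : rho ^t* = rho by exact: (psdmx_wsum _ p_ge0 (fun i => psdmx_gram (ket i))).1.
rewrite /vN_entropy [in \tr (_ *m _)]/rho Re_mxtrace_wsum_mulmx; congr (- _).
apply: eq_bigr => i _; rewrite -mulmxA mxtrace_mulC -mulmxA.
rewrite (mxln_eigen hermrho (wsum_proj_mulmx _ i)) -scalemxAr orthonormal eqxx mxtraceZ.
by rewrite mxtrace_scalar mulr1n mulr1.
Qed.

Lemma sum_Re_mxtrace_proj_le (Phi : {linear 'M[C]_n -> 'M[C]_n}) (rho : 'M[C]_n) :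
  positive_map Phi -> unital Phi -> psdmx rho ->
  \sum_i complex.Re (\tr (Phi (proj i) *m rho)) <= complex.Re (\tr rho).
Proof.
move=> posPhi unitalPhi psdrho.
have PhiE : Phi (1%:M - \sum_i proj i) = 1%:M - \sum_i Phi (proj i).
  by rewrite (raddfB Phi) (raddf_sum Phi); congr (_ - _); exact: unitalPhi.
have := Re_mxtrace_psdM_ge0 (posPhi _ psdmx_1_sub_sum_proj) psdrho.
rewrite PhiE mulmxBl mul1mx (raddfB (@mxtrace _ n)) (raddfB (@complex.Re R)) subr_ge0.
by rewrite mulmx_suml (raddf_sum (@mxtrace _ n)) [X in X <= _](raddf_sum (@complex.Re R)).
Qed.

Lemma sum_expR_mxtrace_mxln_le1 (Phi : {linear 'M[C]_n -> 'M[C]_n}) (rho : 'M[C]_n) :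
  positive_map Phi -> unital Phi -> trace_preserving Phi -> psdmx rho -> \tr rho = 1 ->
  (forall i, supp_sub (Phi (proj i)) rho) ->
  \sum_i expR (complex.Re (\tr (Phi (proj i) *m mxln rho))) <= 1.
Proof.
move=> posPhi unitalPhi tpPhi psdrho trrho1 supp_rho.
have <- : complex.Re (\tr rho) = 1 by rewrite trrho1.
apply: le_trans (sum_Re_mxtrace_proj_le posPhi unitalPhi psdrho).
apply: ler_sum => i _; apply: expR_mxtrace_mxln_le => //; last by rewrite tpPhi mxtrace_proj.
exact/posPhi/psdmx_gram.
Qed.

End Orthonormal.

Unset Implicit Arguments.
Set Strict Implicit.

Theorem corollary1 (R : realType) (n r : nat)
  (Phi : {linear 'M[R[i]]_n -> 'M[R[i]]_n})
  (p : 'I_r -> R) (ket : 'I_r -> 'cV[R[i]]_n) :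
  quantum_channel Phi -> unital Phi ->
  (forall i, 0 < p i <= 1) -> \sum_(i < r) p i = 1 ->
  (forall i j, (ket i)^t* *m ket j = (i == j)%:R%:M) ->
  let rho_in := \sum_(i < r) (real_complex R (p i)) *: (ket i *m (ket i)^t*) in
  let rho_out := Phi rho_in in
  let DeltaS := vN_entropy rho_out - vN_entropy rho_in in
  let L_otm := (- lne (\sum_(i < r)
                   expeR (- cross_entropy (Phi (ket i *m (ket i)^t*)) rho_out)))%E in
  (L_otm <= DeltaS%:E)%E /\ (0 <= L_otm)%E.
Proof.
move=> [/completely_positive_positive posPhi tpPhi] unitalPhi p_bnd p_sum1 orth.
move=> rho_in rho_out DeltaS L_otm.
have p_gt0 i : 0 < p i by case/andP: (p_bnd i).
have p_ge0 i : 0 <= p i := ltW (p_gt0 i).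
pose sigma i := Phi (ket i *m (ket i)^t*).
have psd_sigma i : psdmx (sigma i) by apply/posPhi/psdmx_gram.
have rho_outE : rho_out = \sum_i real_complex R (p i) *: sigma i.
  by rewrite /rho_out linear_sum; apply: eq_bigr => i _; rewrite linearZ.
have psd_rho_out : psdmx rho_out by rewrite rho_outE; exact: psdmx_wsum.
have supp_sigma i : supp_sub (sigma i) rho_out.
  by rewrite rho_outE; exact: psdmx_supp_sub_wsum.
pose c i := - complex.Re (\tr (sigma i *m mxln rho_out)).
have -> : L_otm = (- lne (\sum_i (expR (- c i))%:E))%E.
  by rewrite /L_otm; congr (- lne _)%E; apply: eq_bigr => i _; rewrite /cross_entropy supp_sigma.
have -> : DeltaS = \sum_i p i * c i + \sum_i p i * ln (p i).
  rewrite /DeltaS vN_entropy_wsum_proj // opprK /vN_entropy {1}rho_outE.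
  by rewrite Re_mxtrace_wsum_mulmx -sumrN; congr (_ + _); apply: eq_bigr => i _; rewrite mulrN.
split; first exact: gibbs_lne_sum_expR.
rewrite oppe_ge0 lne_le0 sumEFin lee_fin; under eq_bigr do rewrite opprK.
apply: sum_expR_mxtrace_mxln_le1 => //.
by rewrite tpPhi mxtrace_wsum_proj // -rmorph_sum p_sum1.
Qed.
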